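(* Let $\Delta\geq 1$ be an integer and let $G$ be a graph with $n$ vertices, $m$ edges and maximum degree $\Delta$. Then $$c(G)\;\leq\;1+n+\left(\frac{2^{\Delta+1}-\Delta-2}{\binom{\Delta+1}{2}}\right)m\;\leq\;1+\left(\frac{2^{\Delta+1}-1}{\Delta+1}\right)n.$$
   Context: All graphs are finite, simple and undirected. A clique of a graph $G$ is a (possibly empty) set of pairwise adjacent vertices; $c(G)$ denotes the number of cliques of $G$ (including the empty clique, all single vertices and all edges). *)

From mathcomp Require Import all_boot all_order all_algebra.
Set Implicit Arguments. Unset Strict Implicit. Unset Printing Implicit Defensive.

Definition simple_graph (T : finType) (e : rel T) : Prop :=
  symmetric e /\ irreflexive e.

Definition is_clique (T : finType) (e : rel T) (A : {set T}) : bool :=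
  [forall x in A, forall y in A, (x != y) ==> e x y].

(* c(G): number of cliques, including the empty clique. *)
Definition num_cliques (T : finType) (e : rel T) : nat :=
  #|[set A : {set T} | is_clique e A]|.

Definition edges (T : finType) (e : rel T) : {set {set T}} :=
  [set A : {set T} | (#|A| == 2) && is_clique e A].

Definition num_edges (T : finType) (e : rel T) : nat := #|edges e|.

Definition degree (T : finType) (e : rel T) (v : T) : nat := #|[set u | e v u]|.

Definition max_degree (T : finType) (e : rel T) : nat := \max_(v : T) degree e v.

From mathcomp Require Import all_boot all_order all_algebra.
From mathcomp Require Import zify ring lra.
Set Implicit Arguments. Unset Strict Implicit. Unset Printing Implicit Defensive.
Import Order.TTheory GRing.Theory Num.Theory.
Local Open Scope ring_scope.

(* Let every clique K with at least two vertices spread a unit weight evenly over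
   its 'C(#|K|, 2) edges, so that the cliques of size at least two number at most
   the total weight received by the edges.  A clique through the edge uv is
   determined by its other vertices, a subset of N(u) \ {v}, which has at most
   Delta - 1 elements; hence an edge receives at most
   \sum_j 'C(Delta - 1, j) / 'C(j + 2, 2) = (2^(Delta+1) - Delta - 2) / 'C(Delta + 1, 2).
   The second inequality is the handshake bound 2m <= Delta n. *)

Lemma ler_sum_subcond (R : numDomainType) (I : finType) (P Q : pred I) (F : I -> R) :
  (forall i, P i -> Q i) -> (forall i, Q i -> 0 <= F i) ->
  \sum_(i | P i) F i <= \sum_(i | Q i) F i.
Proof.
move=> PQ F_ge0; rewrite [X in _ <= X](bigID P) /=.
rewrite (eq_bigl (fun i => Q i && P i)) => [|i]; last first.
  by case: (boolP (P i)) => Pi; rewrite ?andbT ?andbF ?PQ.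
by rewrite lerDl sumr_ge0 // => i /andP[/F_ge0].
Qed.

Lemma sum_subsets_card (R : nmodType) (T : finType) (A : {set T}) n (h : nat -> R) :
  (#|A| <= n)%N ->
  \sum_(S : {set T} | S \subset A) h #|S| = \sum_(j < n.+1) h j *+ 'C(#|A|, j).
Proof.
move=> An; rewrite (partition_big (fun S : {set T} => inord #|S| : 'I_n.+1) xpredT) //.
apply: eq_bigr => j _.
rewrite (eq_bigl (fun S => S \in [set S : {set T} | S \subset A & #|S| == j]))
   => [|S]; last first.
  rewrite inE; case: (boolP (S \subset A)) => //= SA.
  have S_lt : (#|S| < n.+1)%N by rewrite ltnS (leq_trans (subset_leq_card SA)).
  by apply/eqP/eqP => [<-|->]; [rewrite inordK | rewrite inord_val].
rewrite (eq_bigr (fun _ => h j)) => [|S]; last by rewrite inE => /andP[_ /eqP->].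
by rewrite sumr_const cards_draws.
Qed.

Lemma sum_bin_from2 n : (\sum_(j < n.+1) 'C(n.+2, j.+2) + n.+3 = 2 ^ n.+2)%N.
Proof.
have := expnDn 1 1 n.+2; rewrite 2!big_ord_recl /= /bump /= !exp1n !muln1 bin1 => ->.
rewrite addnC addnA; congr (_ + _)%N.
by apply: eq_bigr => i _; rewrite !exp1n !muln1.
Qed.

Lemma mul2_bin2 n : (2 * 'C(n.+2, 2) = n.+2 * n.+1)%N.
Proof. by rewrite -(mul_bin_diag n.+2 1) bin1. Qed.

(* Both sides count the pairs P \subset S \subset 'I_n.+2 with #|P| = 2 and #|S| = j + 2. *)
Lemma bin_mul_bin2 n j : ('C(n, j) * 'C(n.+2, 2) = 'C(n.+2, j.+2) * 'C(j.+2, 2))%N.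
Proof.
apply/eqP; rewrite -(eqn_pmul2l (isT : (0 < 2)%N)) mulnCA mul2_bin2.
rewrite [in X in _ == X]mulnCA mul2_bin2 mulnC -!mulnA [(j.+2 * _)%N]mulnC.
have := mul_bin_diag n.+1 j; have := mul_bin_diag n.+2 j.+1; rewrite /= => E2 ->.
by rewrite mulnCA E2 mulnA mulnC.
Qed.

Definition alpha (Delta : nat) : rat :=
  (2 ^ Delta.+1 - Delta - 2)%N%:R / ('C(Delta.+1, 2))%:R.

Lemma sum_bin_div_bin2 n :
  \sum_(j < n.+1) ('C(n, j))%:R / ('C(j.+2, 2))%:R = alpha n.+1.
Proof.
rewrite /alpha; have -> : (2 ^ n.+2 - n.+1 - 2 = \sum_(j < n.+1) 'C(n.+2, j.+2))%N.
  by rewrite -subnDA addn2 -sum_bin_from2 addnK.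
rewrite natr_sum mulr_suml; apply: eq_bigr => j _.
apply/eqP; rewrite eqr_div ?pnatr_eq0 -?lt0n ?bin_gt0 //; apply/eqP.
by rewrite -!natrM bin_mul_bin2.
Qed.

Lemma alpha_le_average Delta (m n : rat) :
  2 * m <= Delta%:R * n ->
  n + alpha Delta * m <= (2 ^ Delta.+1 - 1)%N%:R / (Delta.+1)%:R * n.
Proof.
case: Delta => [|D] mn; first by rewrite /alpha /= !mul0r addr0 divr1 mul1r.
set q := (2 ^ D.+2 - D.+1 - 2)%N.
have D_ge0 : 0 <= D%:R :> rat by [].
have -> : (2 ^ D.+2 - 1 = q + D.+2)%N by have := sum_bin_from2 D; rewrite /q; lia.
have bin2E : ('C(D.+2, 2))%:R = (D.+2)%:R * (D.+1)%:R / 2 :> rat.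
  by rewrite -natrM -mul2_bin2 natrM; field.
have q_ge0 : 0 <= q%:R / ((D.+2)%:R * (D.+1)%:R) :> rat by rewrite divr_ge0 ?mulr_ge0.
have -> : alpha D.+1 * m = q%:R / ((D.+2)%:R * (D.+1)%:R) * (2 * m).
  by rewrite /alpha -/q bin2E; field; rewrite !gt_eqF //; lra.
have -> : (q + D.+2)%N%:R / (D.+2)%:R * n =
          n + q%:R / ((D.+2)%:R * (D.+1)%:R) * ((D.+1)%:R * n) :> rat.
  by rewrite natrD; field; rewrite !gt_eqF //; lra.
by rewrite lerD2l ler_wpM2l.
Qed.

Lemma sum_subsets_inv_bin2_le (T : finType) (A : {set T}) n :
  (#|A| <= n)%N ->
  \sum_(S : {set T} | S \subset A) (('C(#|S|.+2, 2))%:R)^-1 <= alpha n.+1.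
Proof.
move=> An; rewrite (sum_subsets_card (fun s => (('C(s.+2, 2))%:R)^-1) An).
rewrite -sum_bin_div_bin2; apply: ler_sum => j _.
rewrite -[_ *+ _]mulr_natl; apply: ler_wpM2r; by rewrite ?invr_ge0 ?ler_nat ?leq_bin2l.
Qed.

Section Cliques.
Variables (T : finType) (e : rel T).

Lemma cliqueP (A : {set T}) :
  reflect (forall x y, x \in A -> y \in A -> x != y -> e x y) (is_clique e A).
Proof.
apply: (iffP forall_inP) => [cA x y xA yA xy | cA x xA].
  by move/forall_inP/(_ y yA)/implyP: (cA x xA); apply.
by apply/forall_inP => y yA; apply/implyP; apply: cA.
Qed.

Lemma sub_clique (A B : {set T}) : B \subset A -> is_clique e A -> is_clique e B.
Proof.
by move=> BA /cliqueP cA; apply/cliqueP => x y /(subsetP BA) + /(subsetP BA); apply: cA.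
Qed.

Lemma edgesP (f : {set T}) :
  reflect (exists x y, [/\ x != y, e x y, e y x & f = [set x; y]]) (f \in edges e).
Proof.
rewrite inE; apply: (iffP andP) => [[/cards2P[x [y [xy ->]]] cf] | [x [y [xy exy eyx ->]]]].
  by exists x, y; split; rewrite // (cliqueP _ cf) ?inE ?eqxx ?orbT // eq_sym.
split; first by rewrite cards2 xy.
by apply/cliqueP => a b; rewrite !inE => /orP[] /eqP-> /orP[] /eqP->; rewrite ?eqxx.
Qed.

Lemma card_small_cliques : (#|[set K | is_clique e K & #|K| < 2]| <= #|T|.+1)%N.
Proof.
rewrite -add1n; apply: leq_trans (leq_add (leq_b1 (set0 \notin [set [set x] | x : T]))
                                          (leq_imset_card (fun x => [set x]) T)).
rewrite -cardsU1; apply/subset_leq_card/subsetP => K; rewrite !inE => /andP[_].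
rewrite ltnS leq_eqVlt ltnS leqn0 => /orP[/cards1P[x ->] | /eqP/cards0_eq ->].
  by rewrite imset_f ?orbT.
by rewrite eqxx.
Qed.

Lemma card_edges_sub_clique K :
  is_clique e K -> #|[set f in edges e | f \subset K]| = 'C(#|K|, 2).
Proof.
move=> cK; rewrite -cards_draws; apply: eq_card => f; rewrite !inE.
by case: (boolP (f \subset K)) => fK; rewrite ?andbF // andbT (sub_clique fK cK) andbT.
Qed.

Lemma sum_cliques_through_edge_le u v : u != v ->
  \sum_(K : {set T} | is_clique e K && ([set u; v] \subset K)) (('C(#|K|, 2))%:R)^-1
    <= \sum_(S : {set T} | S \subset [set w | e u w] :\ v) (('C(#|S|.+2, 2))%:R)^-1 :> rat.
Proof.
move=> uv; set P := [set K | is_clique e K & [set u; v] \subset K].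
pose core K := K :\: [set u; v].
rewrite (eq_bigl (fun K => K \in P)) => [|K]; last by rewrite inE.
have card_core K : K \in P -> #|K| = (#|core K|).+2.
  rewrite inE => /andP[_ uvK]; rewrite cardsD (setIidPr uvK) cards2 uv.
  by have := subset_leq_card uvK; rewrite cards2 uv -addn2 => /subnK.
have core_inj : {in P &, injective core}.
  move=> K1 K2; rewrite !inE => /andP[_ uvK1] /andP[_ uvK2] eq_core.
  apply/setP => w; case: (boolP (w \in [set u; v])) => wuv.
    by rewrite (subsetP uvK1) // (subsetP uvK2).
  by have /setP/(_ w) := eq_core; rewrite !inE -in_set2 wuv.
rewrite (eq_bigr (fun K => (('C(#|core K|.+2, 2))%:R)^-1)) => [|K /card_core -> //].
rewrite -(big_imset (fun S : {set T} => (('C(#|S|.+2, 2))%:R)^-1) core_inj) /=.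
apply: ler_sum_subcond => [S /imsetP[K] | S _]; last by rewrite invr_ge0.
rewrite inE => /andP[cK uvK] ->; apply/subsetP => w.
rewrite !inE negb_or => /andP[/andP[wu wv] wK]; rewrite wv (cliqueP _ cK) 1?eq_sym //.
by rewrite (subsetP uvK) // !inE eqxx.
Qed.

Lemma edge_clique_weight_le n f :
  (forall v, degree e v <= n.+1)%N -> f \in edges e ->
  \sum_(K : {set T} | is_clique e K && (f \subset K)) (('C(#|K|, 2))%:R)^-1
    <= alpha n.+1.
Proof.
move=> deg_le /edgesP[u [v [uv euv _ ->]]].
apply: le_trans (sum_cliques_through_edge_le uv) (sum_subsets_inv_bin2_le _).
by have := deg_le u; rewrite /degree (cardsD1 v) inE euv add1n ltnS.
Qed.

Lemma handshake n :
  (forall v, degree e v <= n)%N -> (2 * num_edges e <= n * #|T|)%N.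
Proof.
move=> deg_le.
have -> : (2 * num_edges e = \sum_(f in edges e) \sum_(v in f) 1)%N.
  rewrite /num_edges -sum1_card big_distrr /=; apply: eq_bigr => f.
  by rewrite inE => /andP[/eqP f2 _]; rewrite sum1_card f2 muln1.
rewrite (exchange_big_dep xpredT) //= mulnC -sum_nat_const.
apply: leq_sum => v _; rewrite sum1_card; apply: leq_trans (deg_le v).
apply: leq_trans (leq_imset_card (fun u => [set v; u]) [set u | e v u]).
apply/subset_leq_card/subsetP => f; rewrite unfold_in /=.
case/andP=> /edgesP[x [y [_ exy eyx ->]]].
rewrite !inE => /orP[] /eqP ->; apply/imsetP.
  by exists y; rewrite ?inE.
by exists x; rewrite ?inE // setUC.
Qed.

Lemma sum_edges_sub_clique K : is_clique e K -> (2 <= #|K|)%N ->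
  \sum_(f | (f \in edges e) && (f \subset K)) (('C(#|K|, 2))%:R)^-1 = 1 :> rat.
Proof.
move=> cK K2; rewrite (eq_bigl (mem [set f in edges e | f \subset K])) => [|f]; last first.
  by rewrite !inE.
rewrite sumr_const card_edges_sub_clique // -[_ *+ _]mulr_natr.
by rewrite mulVf ?pnatr_eq0 -?lt0n ?bin_gt0.
Qed.

Lemma num_cliques_le n : (forall v, degree e v <= n.+1)%N ->
  (num_cliques e)%:R <= 1 + #|T|%:R + alpha n.+1 * (num_edges e)%:R :> rat.
Proof.
move=> deg_le.
rewrite /num_cliques -sum1_card natr_sum (eq_bigl (is_clique e)) => [|K]; last first.
  by rewrite inE.
rewrite (bigID (fun K : {set T} => #|K| < 2)%N) /=; apply: lerD.
  rewrite sumr_const nat1r ler_nat; apply: leq_trans card_small_cliques.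
  by apply/subset_leq_card/subsetP => K; rewrite !inE.
under eq_bigr => K /andP[cK K2] do rewrite -(sum_edges_sub_clique cK) 1?leqNgt //.
rewrite (exchange_big_dep (mem (edges e))) /= => [|K f _ /andP[] //].
rewrite /num_edges mulr_natr -sumr_const; apply: ler_sum => f fe.
apply: le_trans (edge_clique_weight_le deg_le fe).
by apply: ler_sum_subcond => [K /andP[/andP[-> _] /andP[_ ->]] | K _] //; rewrite invr_ge0.
Qed.

End Cliques.

Theorem theorem3 (T : finType) (e : rel T) (Delta : nat) :
  simple_graph e -> (1 <= Delta)%N -> max_degree e = Delta ->
  let n : rat := (#|T|)%:R in
  let m : rat := (num_edges e)%:R in
  let c : rat := (num_cliques e)%:R in
  c <= 1 + n + ((2 ^ Delta.+1 - Delta - 2)%N%:R / ('C(Delta.+1, 2))%:R) * m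
  /\
  1 + n + ((2 ^ Delta.+1 - Delta - 2)%N%:R / ('C(Delta.+1, 2))%:R) * m
    <= 1 + ((2 ^ Delta.+1 - 1)%N%:R / (Delta.+1)%:R) * n.
Proof.
move=> _ Delta_gt0 maxE n m c; rewrite -/(alpha Delta).
have deg_le v : (degree e v <= Delta)%N by rewrite -maxE; apply: leq_bigmax.
split.
  by case: Delta Delta_gt0 {maxE} deg_le => // D _ /num_cliques_le.
rewrite -addrA lerD2l; apply: alpha_le_average.
by rewrite /m /n -!natrM ler_nat handshake.
Qed.
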